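(* Fix any total budget $\mathrm{TB}\in\mathbb N_0$ and game forms $G,H$. Suppose $G$ has an inverse $G'$, i.e. $G+G'=0$. Then $G+H=G$ implies $H=0$.
   Context: Game forms are defined recursively: $G=\{G^{\mathcal L}\mid G^{\mathcal R}\}$ with finite sets of Left and Right options, and finite birthday. $0=\{\varnothing\mid\varnothing\}$. The budget set for total budget $\mathrm{TB}$ is $\mathcal B=\{0,\dots,\mathrm{TB},\hat 0,\dots,\widehat{\mathrm{TB}}\}$: state $p$ (resp. $\hat p$) means Left holds $p$ dollars and Right holds $\mathrm{TB}-p$, and Right (resp. Left) holds the tie-breaking marker. Play of $(G,\tilde p)$: at every position (terminal ones included) both players bid simultaneously, Left $\ell\in\{0,\dots,p\}$, Right $r\in\{0,\dots,\mathrm{TB}-p\}$. If Left holds the marker (state $\hat p$): if $\ell>r$ Left moves to $(G^L,\widehat{p-\ell})$, or, including the marker (allowed when $\ell\ge r$), to $(G^L,p-\ell)$; if $\ell=r$ Left wins, the marker passes to Right, play continues at $(G^L,p-\ell)$; if $\ell<r$ Right moves to $(G^R,\widehat{p+r})$. Symmetrically when Right holds the marker (state $p$): if $r>\ell$ Right moves to $(G^R,p+r)$ or, including the marker, to $(G^R,\widehat{p+r})$; if $r=\ell$ Right wins, the marker passes to Left, play continues at $(G^R,\widehat{p+r})$; if $r<\ell$ Left moves to $(G^L,p-\ell)$. A player who wins a bid but has no option loses. $o(G,\tilde p)\in\{\mathrm L,\mathrm R\}$ is the winner under optimal play; $\mathrm L>\mathrm R$. Disjunctive sum $G+H=\{G^{\mathcal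 L}+H,G+H^{\mathcal L}\mid G^{\mathcal R}+H,G+H^{\mathcal R}\}$. $G\ge H$ means $o(G+X,\tilde p)\ge o(H+X,\tilde p)$ for all game forms $X$ and all $\tilde p\in\mathcal B$; $G=H$ means $G\ge H$ and $H\ge G$. *)

From Stdlib Require Import List Arith Bool.
Import ListNotations.

(* Game forms: finite lists of Left and Right options (finite birthday by
   construction).  The outcome depends only on the sets of options. *)
Inductive game : Type :=
  | Game : list game -> list game -> game.

Definition gzero : game := Game [] [].

Fixpoint gadd (G : game) : game -> game :=
  match G with
  | Game GL GR =>
      fix gaddG (H : game) : game :=
        match H with
        | Game HL HR =>
            Game (map (fun g => gadd g H) GL ++ map gaddG HL)
                 (map (fun g => gadd g H) GR ++ map gaddG HR)
        end
  end.

(* Budget states: a pair (p, hat) with p <= TB.  Left holds p dollars and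
   Right holds TB - p.  hat = true is the state \hat p (Left holds the
   tie-breaking marker); hat = false is the state p (Right holds it). *)
Fixpoint lwin (TB : nat) (G : game) (p : nat) (hat : bool) {struct G} : bool :=
  match G with
  | Game Ls Rs =>
      let LL := fun (q : nat) (h : bool) =>
                  existsb (fun GL => lwin TB GL q h) Ls in
      let RR := fun (q : nat) (h : bool) =>
                  forallb (fun GR => lwin TB GR q h) Rs in
      existsb (fun l =>
        forallb (fun r =>
          if hat then
            match Nat.compare l r with
            | Gt => LL (p - l) true || LL (p - l) false
            | Eq => LL (p - l) false
            | Lt => RR (p + r) true
            end
          else
            match Nat.compare r l with
            | Gt => RR (p + r) false && RR (p + r) true
            | Eq => RR (p + r) true
            | Lt => LL (p - l) false
            end)
          (seq 0 (TB - p + 1)))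
        (seq 0 (p + 1))
  end.

Inductive outcome : Type := OL | OR.

Definition outcome_le (a b : outcome) : Prop :=
  match a, b with
  | OL, OR => False
  | _, _ => True
  end.

Definition o (TB : nat) (G : game) (p : nat) (hat : bool) : outcome :=
  if lwin TB G p hat then OL else OR.

Definition game_ge (TB : nat) (G H : game) : Prop :=
  forall (X : game) (p : nat) (hat : bool), p <= TB ->
    outcome_le (o TB (gadd H X) p hat) (o TB (gadd G X) p hat).

Definition game_eq (TB : nat) (G H : game) : Prop :=
  game_ge TB G H /\ game_ge TB H G.

(** Game forms whose Left and Right options agree as sets, recursively, have
    the same outcome in every budget state, and disjunctive sum is
    commutative, associative and has [0] as identity up to this identity of
    forms.  Hence [game_eq] is a congruence for [+] on which [+] is a
    commutative monoid, and the usual cancellation works: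
    [H = (G + G') + H = (G + H) + G' = G + G' = 0]. *)

From Stdlib Require Import List Bool.
From Stdlib Require Import FunctionalExtensionality Setoid Morphisms.

Lemma game_ind_in (P : game -> Prop) :
  (forall Ls Rs, (forall G, In G Ls -> P G) -> (forall G, In G Rs -> P G) ->
     P (Game Ls Rs)) ->
  forall G, P G.
Proof.
  intros step. fix IH 1. intros [Ls Rs]. apply step.
  - induction Ls as [|G Ls IHLs]; intros K HK;
      [destruct HK | destruct HK as [<-|HK]; [apply IH | apply IHLs, HK]].
  - induction Rs as [|G Rs IHRs]; intros K HK;
      [destruct HK | destruct HK as [<-|HK]; [apply IH | apply IHRs, HK]].
Qed.

Definition egli_milner {A B : Type} (R : A -> B -> Prop)
    (l1 : list A) (l2 : list B) : Prop :=
  (forall a, In a l1 -> exists b, In b l2 /\ R a b) /\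
  (forall b, In b l2 -> exists a, In a l1 /\ R a b).

Lemma egli_milner_app {A B : Type} (R : A -> B -> Prop) l1 l2 m1 m2 :
  egli_milner R l1 m1 -> egli_milner R l2 m2 ->
  egli_milner R (l1 ++ l2) (m1 ++ m2).
Proof.
  intros [H1 H1'] [H2 H2']. split.
  - intros a Ha. apply in_app_iff in Ha as [Ha|Ha];
      [destruct (H1 a Ha) as (b & Hb & Rab) | destruct (H2 a Ha) as (b & Hb & Rab)];
      exists b; rewrite in_app_iff; auto.
  - intros b Hb. apply in_app_iff in Hb as [Hb|Hb];
      [destruct (H1' b Hb) as (a & Ha & Rab) | destruct (H2' b Hb) as (a & Ha & Rab)];
      exists a; rewrite in_app_iff; auto.
Qed.

Lemma egli_milner_app_comm_r {A B : Type} (R : A -> B -> Prop) l m1 m2 :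
  egli_milner R l (m1 ++ m2) -> egli_milner R l (m2 ++ m1).
Proof.
  intros [H H']. split.
  - intros a Ha. destruct (H a Ha) as (b & Hb & Rab).
    exists b. rewrite in_app_iff in *. tauto.
  - intros b Hb. apply H'. rewrite in_app_iff in *. tauto.
Qed.

Lemma egli_milner_map {A B A' B' : Type} (R : A -> B -> Prop) (S : A' -> B' -> Prop)
    (f : A -> A') (g : B -> B') l1 l2 :
  egli_milner R l1 l2 ->
  (forall a b, In a l1 -> R a b -> S (f a) (g b)) ->
  egli_milner S (map f l1) (map g l2).
Proof.
  intros [H H'] Hfg. split.
  - intros fa Hfa. apply in_map_iff in Hfa as (a & <- & Ha).
    destruct (H a Ha) as (b & Hb & Rab). exists (g b). auto using in_map.
  - intros gb Hgb. apply in_map_iff in Hgb as (b & <- & Hb).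
    destruct (H' b Hb) as (a & Ha & Rab). exists (f a). auto using in_map.
Qed.

Lemma egli_milner_map_diag {A B C : Type} (S : A -> B -> Prop) (f : C -> A) (g : C -> B) l :
  (forall c, In c l -> S (f c) (g c)) -> egli_milner S (map f l) (map g l).
Proof.
  intros Hfg. apply (egli_milner_map eq).
  - split; intros c Hc; exists c; auto.
  - intros c c' Hc <-. auto.
Qed.

Lemma egli_milner_map_l {A B : Type} (S : A -> B -> Prop) (f : B -> A) l :
  (forall b, In b l -> S (f b) b) -> egli_milner S (map f l) l.
Proof. intros Hf. rewrite <- (map_id l) at 2. apply egli_milner_map_diag, Hf. Qed.

Lemma existsb_egli_milner {A B : Type} (R : A -> B -> Prop) (f : A -> bool) (g : B -> bool) l1 l2 :
  egli_milner R l1 l2 -> (forall a b, In a l1 -> R a b -> f a = g b) ->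
  existsb f l1 = existsb g l2.
Proof.
  intros [H H'] Hfg. apply eq_true_iff_eq. rewrite !existsb_exists. split.
  - intros (a & Ha & Hfa). destruct (H a Ha) as (b & Hb & Rab).
    exists b. rewrite <- (Hfg a b); auto.
  - intros (b & Hb & Hgb). destruct (H' b Hb) as (a & Ha & Rab).
    exists a. rewrite (Hfg a b); auto.
Qed.

Lemma forallb_egli_milner {A B : Type} (R : A -> B -> Prop) (f : A -> bool) (g : B -> bool) l1 l2 :
  egli_milner R l1 l2 -> (forall a b, In a l1 -> R a b -> f a = g b) ->
  forallb f l1 = forallb g l2.
Proof.
  intros [H H'] Hfg. apply eq_true_iff_eq. rewrite !forallb_forall. split.
  - intros Hf b Hb. destruct (H' b Hb) as (a & Ha & Rab).
    rewrite <- (Hfg a b); auto.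
  - intros Hg a Ha. destruct (H a Ha) as (b & Hb & Rab).
    rewrite (Hfg a b); auto.
Qed.

Inductive identical : game -> game -> Prop :=
  | identical_Game Ls1 Rs1 Ls2 Rs2 :
      egli_milner identical Ls1 Ls2 -> egli_milner identical Rs1 Rs2 ->
      identical (Game Ls1 Rs1) (Game Ls2 Rs2).

Lemma identical_refl G : identical G G.
Proof.
  induction G as [Ls Rs IHL IHR] using game_ind_in.
  constructor; split; intros K HK; exists K; auto.
Qed.

Definition lwin_bidding (TB : nat) (LL RR : nat -> bool -> bool)
    (p : nat) (hat : bool) : bool :=
  existsb (fun l =>
    forallb (fun r =>
      if hat then
        match Nat.compare l r with
        | Gt => LL (p - l) true || LL (p - l) false
        | Eq => LL (p - l) false
        | Lt => RR (p + r) true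
        end
      else
        match Nat.compare r l with
        | Gt => RR (p + r) false && RR (p + r) true
        | Eq => RR (p + r) true
        | Lt => LL (p - l) false
        end)
      (seq 0 (TB - p + 1)))
    (seq 0 (p + 1)).

Lemma lwin_Game TB Ls Rs p hat :
  lwin TB (Game Ls Rs) p hat =
  lwin_bidding TB (fun q h => existsb (fun GL => lwin TB GL q h) Ls)
                  (fun q h => forallb (fun GR => lwin TB GR q h) Rs) p hat.
Proof. reflexivity. Qed.

Lemma lwin_identical TB G G' p hat :
  identical G G' -> lwin TB G p hat = lwin TB G' p hat.
Proof.
  revert G' p hat.
  induction G as [Ls Rs IHL IHR] using game_ind_in.
  intros G' p hat HG. inversion HG as [? ? Ls' Rs' HL HR]; subst.
  rewrite !lwin_Game. f_equal; extensionality q; extensionality h.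
  - apply (existsb_egli_milner identical); auto.
  - apply (forallb_egli_milner identical); auto.
Qed.

Definition left_opts (G : game) : list game := let 'Game Ls _ := G in Ls.
Definition right_opts (G : game) : list game := let 'Game _ Rs := G in Rs.

Lemma identical_opts G G' :
  egli_milner identical (left_opts G) (left_opts G') ->
  egli_milner identical (right_opts G) (right_opts G') ->
  identical G G'.
Proof. destruct G, G'. apply identical_Game. Qed.

Lemma left_opts_gadd G H :
  left_opts (gadd G H) =
  map (fun g => gadd g H) (left_opts G) ++ map (gadd G) (left_opts H).
Proof. destruct G, H; reflexivity. Qed.

Lemma right_opts_gadd G H :
  right_opts (gadd G H) =
  map (fun g => gadd g H) (right_opts G) ++ map (gadd G) (right_opts H).
Proof. destruct G, H; reflexivity. Qed.

Lemma identical_gadd_0_l G : identical (gadd gzero G) G.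
Proof.
  induction G as [Ls Rs IHL IHR] using game_ind_in.
  apply identical_opts; rewrite ?left_opts_gadd, ?right_opts_gadd;
    cbn [left_opts right_opts gzero map app]; apply egli_milner_map_l; auto.
Qed.

Lemma identical_gadd_compat G G' H H' :
  identical G G' -> identical H H' -> identical (gadd G H) (gadd G' H').
Proof.
  revert G' H H'.
  induction G as [GL GR IHGL IHGR] using game_ind_in. intros G' H.
  induction H as [HL HR IHHL IHHR] using game_ind_in. intros H' HG HH.
  inversion HG as [? ? GL' GR' HGL HGR]; subst.
  inversion HH as [? ? HL' HR' HHL HHR]; subst.
  apply identical_opts; rewrite ?left_opts_gadd, ?right_opts_gadd;
    apply egli_milner_app; eapply egli_milner_map; eauto.
Qed.

Lemma identical_gadd_comm G H : identical (gadd G H) (gadd H G).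
Proof.
  revert H.
  induction G as [GL GR IHGL IHGR] using game_ind_in. intros H.
  induction H as [HL HR IHHL IHHR] using game_ind_in.
  apply identical_opts; rewrite ?left_opts_gadd, ?right_opts_gadd;
    apply egli_milner_app_comm_r, egli_milner_app;
    apply egli_milner_map_diag; auto.
Qed.

Lemma identical_gadd_assoc G H K :
  identical (gadd (gadd G H) K) (gadd G (gadd H K)).
Proof.
  revert H K.
  induction G as [GL GR IHGL IHGR] using game_ind_in. intros H.
  induction H as [HL HR IHHL IHHR] using game_ind_in. intros K.
  induction K as [KL KR IHKL IHKR] using game_ind_in.
  apply identical_opts; rewrite ?left_opts_gadd, ?right_opts_gadd;
    rewrite ?map_app, ?map_map, <- ?app_assoc;
    repeat apply egli_milner_app; apply egli_milner_map_diag; auto.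
Qed.

Section GameEq.

Variable TB : nat.

Lemma game_eqP A B :
  game_eq TB A B <->
  forall X p hat, p <= TB -> lwin TB (gadd A X) p hat = lwin TB (gadd B X) p hat.
Proof.
  unfold game_eq, game_ge, o, outcome_le. split.
  - intros [HAB HBA] X p hat Hp.
    specialize (HAB X p hat Hp). specialize (HBA X p hat Hp).
    destruct (lwin TB (gadd A X) p hat), (lwin TB (gadd B X) p hat); tauto.
  - intros E. split; intros X p hat Hp; rewrite (E X p hat Hp);
      destruct (lwin TB (gadd B X) p hat); exact I.
Qed.

#[export] Instance game_eq_Equivalence : Equivalence (game_eq TB).
Proof.
  split.
  - intros A. apply game_eqP. reflexivity.
  - intros A B HAB. rewrite game_eqP in *. intros X p hat Hp.
    symmetry. auto.
  - intros A B C HAB HBC. rewrite game_eqP in *. intros X p hat Hp.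
    rewrite HAB; auto.
Qed.

Lemma game_eq_identical A B : identical A B -> game_eq TB A B.
Proof.
  intros HAB. apply game_eqP. intros X p hat _.
  apply lwin_identical, identical_gadd_compat; [exact HAB | apply identical_refl].
Qed.

Lemma gadd_0_l A : game_eq TB (gadd gzero A) A.
Proof. apply game_eq_identical, identical_gadd_0_l. Qed.

Lemma gadd_comm A B : game_eq TB (gadd A B) (gadd B A).
Proof. apply game_eq_identical, identical_gadd_comm. Qed.

Lemma gadd_assoc A B C : game_eq TB (gadd (gadd A B) C) (gadd A (gadd B C)).
Proof. apply game_eq_identical, identical_gadd_assoc. Qed.

Lemma gadd_game_eq_compat_r A B C :
  game_eq TB A B -> game_eq TB (gadd A C) (gadd B C).
Proof.
  rewrite !game_eqP. intros HAB X p hat Hp.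
  rewrite !(lwin_identical TB _ _ p hat (identical_gadd_assoc _ C X)).
  auto.
Qed.

#[export] Instance gadd_Proper : Proper (game_eq TB ==> game_eq TB ==> game_eq TB) gadd.
Proof.
  intros A A' HA B B' HB.
  rewrite (gadd_game_eq_compat_r _ _ B HA), (gadd_comm A' B), (gadd_comm A' B').
  apply gadd_game_eq_compat_r, HB.
Qed.

Lemma gadd_shuffle0 A B C : game_eq TB (gadd (gadd A B) C) (gadd (gadd A C) B).
Proof. rewrite !gadd_assoc, (gadd_comm B C). reflexivity. Qed.

End GameEq.

Theorem mainTheorem10 (TB : nat) (G H : game) :
  (exists G' : game, game_eq TB (gadd G G') gzero) ->
  game_eq TB (gadd G H) G ->
  game_eq TB H gzero.
Proof.
  intros [G' HG'] HGH.
  transitivity (gadd (gadd G G') H).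
  - rewrite HG'. symmetry. apply gadd_0_l.
  - rewrite gadd_shuffle0, HGH. exact HG'.
Qed.
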